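(* The following hold: $$\alpha(4)=1,\qquad \alpha(3)\ge \tfrac12,\qquad \beta(4)\ge \tfrac13,\qquad \beta(3)\ge \tfrac14.$$
   Context: A set $S$ of positive integers is called $n$-free if its elements can be arranged in a sequence, each element appearing exactly once, that contains no $n$-term arithmetic progression as a subsequence. The sequence is a finite permutation if $S$ is finite, and a sequence indexed by the positive integers if $S$ is infinite. A sequence contains an $n$-term arithmetic progression as a subsequence if there are positions $i_1<\cdots<i_n$ whose entries satisfy $a_{i_{m+1}}-a_{i_m}=d$ for all $m$, for some fixed $d\ne0$ (positive or negative). For $S\subseteq\mathbb{Z}_{>0}$, let $A(n)=|S\cap[1,n]|$. The upper density is $\overline{d}(S)=\limsup_{n\to\infty}A(n)/n$ and the lower density is $\underline{d}(S)=\liminf_{n\to\infty}A(n)/n$. For $n\ge3$, define $$\alpha(n)=\sup\{\overline{d}(S): S \text{ is } n\text{-free}\},\qquad \beta(n)=\sup\{\underline{d}(S): S \text{ is } n\text{-free}\}.$$ *)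

From Stdlib Require Import Reals ZArith List Lia.
Open Scope R_scope.

(* A set S of positive integers is represented by its characteristic
   function S : nat -> bool, with S 0 = false. *)
Definition pos_set (S : nat -> bool) : Prop := S 0%nat = false.

(* The sequence f (indexed by nat) contains an n-term arithmetic
   progression (common difference d <> 0, any sign) as a subsequence,
   using only positions satisfying [ok] (all positions for infinite
   sequences, positions < length for finite lists). *)
Definition has_AP_on (n : nat) (ok : nat -> Prop) (f : nat -> Z) : Prop :=
  exists (idx : nat -> nat) (d : Z),
    d <> 0%Z /\
    (forall m, (m < n)%nat -> ok (idx m)) /\
    (forall m, (S m < n)%nat -> (idx m < idx (S m))%nat) /\
    (forall m, (S m < n)%nat -> (f (idx (S m)) - f (idx m))%Z = d).

Definition list_arrangement_free (n : nat) (S : nat -> bool) : Prop :=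
  exists l : list nat,
    NoDup l /\ (forall x, In x l <-> S x = true) /\
    ~ has_AP_on n (fun i => (i < length l)%nat) (fun i => Z.of_nat (nth i l 0%nat)).

(* Infinite arrangement: a sequence indexed by the positive integers
   (here shifted to start at 0) in which each element of S appears
   exactly once. *)
Definition seq_arrangement_free (n : nat) (S : nat -> bool) : Prop :=
  exists a : nat -> nat,
    (forall i j, a i = a j -> i = j) /\
    (forall x, S x = true <-> exists i, a i = x) /\
    ~ has_AP_on n (fun _ => True) (fun i => Z.of_nat (a i)).

(* S is n-free.  A finite set can only be arranged as a list and an
   infinite set only as an injective sequence, so the disjunction
   matches the paper's case distinction. *)
Definition n_free (n : nat) (S : nat -> bool) : Prop :=
  pos_set S /\ (list_arrangement_free n S \/ seq_arrangement_free n S).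

Definition count_upto (S : nat -> bool) (N : nat) : nat :=
  length (filter S (seq 1 N)).
Definition dens_seq (S : nat -> bool) (N : nat) : R :=
  INR (count_upto S N) / INR N.

Definition is_limsup (u : nat -> R) (l : R) : Prop :=
  (forall eps, eps > 0 -> exists N, forall k, (k >= N)%nat -> u k < l + eps) /\
  (forall eps, eps > 0 -> forall N, exists k, (k >= N)%nat /\ u k > l - eps).
Definition is_liminf (u : nat -> R) (l : R) : Prop :=
  (forall eps, eps > 0 -> exists N, forall k, (k >= N)%nat -> u k > l - eps) /\
  (forall eps, eps > 0 -> forall N, exists k, (k >= N)%nat /\ u k < l + eps).

Definition upper_density (S : nat -> bool) (x : R) : Prop := is_limsup (dens_seq S) x.
Definition lower_density (S : nat -> bool) (x : R) : Prop := is_liminf (dens_seq S) x.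

Definition is_alpha (n : nat) (a : R) : Prop :=
  is_lub (fun x => exists S, n_free n S /\ upper_density S x) a.
Definition is_beta (n : nat) (b : R) : Prop :=
  is_lub (fun x => exists S, n_free n S /\ lower_density S x) b.

(* Take a set made of blocks [first b, first b + size b) such that each block
   begins beyond twice the end of the previous one, and arrange it block after
   block, each block ordered "evens before odds" recursively, an order with no
   3-term AP.  An AP x + z = 2y whose middle term lies in an earlier block than
   its last term is then impossible, so the last three terms of a 4-term AP
   would lie in one block: such sets are 4-free.  If moreover the largest
   element of a block plus the largest element of any later block is less than
   twice the smallest element of the later block, the first term of a 3-term AP
   cannot lie in an earlier block either, and the set is 3-free.

   The blocks [2 * 3^b, 3^(b+1)) give a 3-free set of upper density 1/2 and
   lower density at least 1/4; the blocks [(2c)^b, c (2c)^b) give 4-free sets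
   of upper density at least 1 - 1/c, and of lower density at least 1/3 for
   c = 4. *)

From Stdlib Require Import Reals.
From Stdlib Require Import Lra Lia List Classical.
Open Scope R_scope.

Local Open Scope nat_scope.

Lemma half_cases n : n = 2 * (n / 2) \/ n = 2 * (n / 2) + 1.
Proof.
  pose proof (Nat.div_mod_eq n 2); pose proof (Nat.mod_upper_bound n 2 ltac:(lia)); lia.
Qed.

(* [parity_perm K K] arranges [0, K): the even numbers first, then the odd
   ones, each half arranged recursively.  The fuel only bounds the depth. *)
Fixpoint parity_perm (fuel K j : nat) : nat :=
  match fuel with
  | 0 => 0
  | S fuel =>
      if K <=? 1 then 0
      else if j <? K - K / 2 then 2 * parity_perm fuel (K - K / 2) j
      else 2 * parity_perm fuel (K / 2) (j - (K - K / 2)) + 1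
  end.

Lemma parity_perm_lt fuel K j : K <= fuel -> j < K -> parity_perm fuel K j < K.
Proof.
  revert K j; induction fuel as [|fuel IH]; intros K j HK Hj; cbn [parity_perm]; [lia|].
  pose proof (half_cases K).
  destruct (Nat.leb_spec K 1); [lia|].
  destruct (Nat.ltb_spec j (K - K / 2)).
  - pose proof (IH (K - K / 2) j ltac:(lia) ltac:(lia)); lia.
  - pose proof (IH (K / 2) (j - (K - K / 2)) ltac:(lia) ltac:(lia)); lia.
Qed.

Lemma parity_perm_inj fuel K j j' : K <= fuel -> j < K -> j' < K ->
  parity_perm fuel K j = parity_perm fuel K j' -> j = j'.
Proof.
  revert K j j'; induction fuel as [|fuel IH]; intros K j j' HK Hj Hj';
    cbn [parity_perm]; [lia|].
  pose proof (half_cases K).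
  destruct (Nat.leb_spec K 1); [lia|].
  destruct (Nat.ltb_spec j (K - K / 2)), (Nat.ltb_spec j' (K - K / 2)); intros E.
  - apply (IH (K - K / 2)); lia.
  - lia.
  - lia.
  - enough (j - (K - K / 2) = j' - (K - K / 2)) by lia.
    apply (IH (K / 2)); lia.
Qed.

Lemma parity_perm_surj fuel K x : K <= fuel -> x < K ->
  exists j, j < K /\ parity_perm fuel K j = x.
Proof.
  revert K x; induction fuel as [|fuel IH]; intros K x HK Hx; [lia|].
  cbn [parity_perm]. pose proof (half_cases K) as HK2.
  destruct (Nat.leb_spec K 1); [exists 0; lia|].
  destruct (half_cases x) as [Hx2|Hx2].
  - destruct (IH (K - K / 2) (x / 2) ltac:(lia) ltac:(lia)) as [j [Hj Hpj]].
    exists j; split; [lia|].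
    destruct (Nat.ltb_spec j (K - K / 2)); lia.
  - destruct (IH (K / 2) (x / 2) ltac:(lia) ltac:(lia)) as [j [Hj Hpj]].
    exists (K - K / 2 + j); split; [lia|].
    destruct (Nat.ltb_spec (K - K / 2 + j) (K - K / 2)); [lia|].
    replace (K - K / 2 + j - (K - K / 2)) with j by lia; lia.
Qed.

(* If [x + z = 2 y] then [x] and [z] have the same parity, so they lie in the
   same half, and so does [y], which is placed between them. *)
Lemma parity_perm_no_AP3 fuel K j1 j2 j3 : K <= fuel -> j1 < j2 -> j2 < j3 -> j3 < K ->
  parity_perm fuel K j1 + parity_perm fuel K j3 <> 2 * parity_perm fuel K j2.
Proof.
  revert K j1 j2 j3; induction fuel as [|fuel IH]; intros K j1 j2 j3 HK H12 H23 H3;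
    cbn [parity_perm]; [lia|].
  pose proof (half_cases K).
  destruct (Nat.leb_spec K 1); [lia|].
  destruct (Nat.ltb_spec j1 (K - K / 2)), (Nat.ltb_spec j2 (K - K / 2)),
    (Nat.ltb_spec j3 (K - K / 2)); try lia.
  - pose proof (IH (K - K / 2) j1 j2 j3 ltac:(lia) H12 H23 ltac:(lia)); lia.
  - pose proof (IH (K / 2) (j1 - (K - K / 2)) (j2 - (K - K / 2)) (j3 - (K - K / 2))
      ltac:(lia) ltac:(lia) ltac:(lia) ltac:(lia)); lia.
Qed.

Lemma not_has_AP_3 ok (f : nat -> nat) :
  (forall i0 i1 i2, i0 < i1 -> i1 < i2 -> f i0 + f i2 <> 2 * f i1) ->
  ~ has_AP_on 3 ok (fun i => Z.of_nat (f i)).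
Proof.
  intros Hf [idx [d [_ [_ [Hinc Hdiff]]]]].
  apply (Hf (idx 0) (idx 1) (idx 2)); [apply Hinc; lia | apply Hinc; lia |].
  pose proof (Hdiff 0 ltac:(lia)); pose proof (Hdiff 1 ltac:(lia)); lia.
Qed.

Lemma not_has_AP_4 ok (f : nat -> nat) :
  (forall i0 i1 i2 i3, i0 < i1 -> i1 < i2 -> i2 < i3 ->
     f i0 + f i2 = 2 * f i1 -> f i1 + f i3 <> 2 * f i2) ->
  ~ has_AP_on 4 ok (fun i => Z.of_nat (f i)).
Proof.
  intros Hf [idx [d [_ [_ [Hinc Hdiff]]]]].
  apply (Hf (idx 0) (idx 1) (idx 2) (idx 3)); try (apply Hinc; lia).
  - pose proof (Hdiff 0 ltac:(lia)); pose proof (Hdiff 1 ltac:(lia)); lia.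
  - pose proof (Hdiff 1 ltac:(lia)); pose proof (Hdiff 2 ltac:(lia)); lia.
Qed.

Lemma count_upto_S A N :
  count_upto A (S N) = count_upto A N + (if A (S N) then 1 else 0).
Proof.
  unfold count_upto. rewrite seq_S, filter_app, length_app.
  replace (1 + N) with (S N) by lia. simpl. destruct (A (S N)); simpl; lia.
Qed.

Lemma count_upto_le A N : count_upto A N <= N.
Proof.
  unfold count_upto. rewrite <- (length_seq N 1) at 2. apply filter_length_le.
Qed.

Lemma count_upto_run_full A a r : (forall x, a < x <= a + r -> A x = true) ->
  count_upto A (a + r) = count_upto A a + r.
Proof.
  induction r as [|r IH]; intros H; [now rewrite !Nat.add_0_r|].
  rewrite Nat.add_succ_r, count_upto_S, IH, (H (S (a + r))); [lia | lia |].
  intros x Hx; apply H; lia.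
Qed.

Lemma count_upto_run_empty A a r : (forall x, a < x <= a + r -> A x = false) ->
  count_upto A (a + r) = count_upto A a.
Proof.
  induction r as [|r IH]; intros H; [now rewrite !Nat.add_0_r|].
  rewrite Nat.add_succ_r, count_upto_S, IH, (H (S (a + r))); [lia | lia |].
  intros x Hx; apply H; lia.
Qed.

Section BlockSet.

Variables first size : nat -> nat.
Hypothesis size_pos : forall b, 1 <= size b.
Hypothesis first_pos : 1 <= first 0.
(* Doubling between blocks: an AP cannot have its middle term in one block and
   its last term in a later one. *)
Hypothesis first_gap : forall b, 2 * (first b + size b) <= first (S b).

Lemma first_gap_lt b b' : b < b' -> 2 * (first b + size b) <= first b'.
Proof.
  induction b' as [|b' IH]; intros H; [lia|].
  destruct (Nat.eq_dec b b'); [subst; apply first_gap|].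
  specialize (IH ltac:(lia)); specialize (first_gap b'); lia.
Qed.

Lemma first_mono b b' : b <= b' -> first b <= first b'.
Proof.
  intros H; destruct (Nat.eq_dec b b'); [subst; lia|].
  pose proof (first_gap_lt b b' ltac:(lia)); lia.
Qed.

Lemma first_gt b : b < first b.
Proof. induction b; [lia|]. specialize (first_gap b); lia. Qed.

Definition block_set (x : nat) : bool :=
  existsb (fun b => andb (first b <=? x) (x <? first b + size b)) (seq 0 x).

Lemma block_set_spec x : block_set x = true <-> exists b, first b <= x < first b + size b.
Proof.
  unfold block_set; rewrite existsb_exists; split.
  - intros [b [_ Hb]]; exists b.
    apply andb_prop in Hb as [H1 H2]; apply Nat.leb_le in H1; apply Nat.ltb_lt in H2; lia.
  - intros [b Hb]; exists b; split.
    + apply in_seq; pose proof (first_gt b); lia.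
    + apply andb_true_intro; split; [apply Nat.leb_le | apply Nat.ltb_lt]; lia.
Qed.

Lemma block_set_0 : block_set 0 = false.
Proof. reflexivity. Qed.

Lemma block_set_gap b x : first b + size b <= x < first (S b) -> block_set x = false.
Proof.
  intros Hx; destruct (block_set x) eqn:E; [|reflexivity].
  apply block_set_spec in E as [b' Hb'].
  destruct (Nat.lt_trichotomy b' b) as [Hlt|[->|Hlt]].
  - pose proof (first_gap_lt b' b Hlt); lia.
  - lia.
  - pose proof (first_mono (S b) b' Hlt); lia.
Qed.

Fixpoint block_pos (b : nat) : nat :=
  match b with 0 => 0 | S b => block_pos b + size b end.

Fixpoint locate (i : nat) : nat * nat :=
  match i with
  | 0 => (0, 0)
  | S i => let (b, j) := locate i in if S j <? size b then (b, S j) else (S b, 0)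
  end.

Lemma locate_spec i b j : locate i = (b, j) -> j < size b /\ i = block_pos b + j.
Proof.
  revert b j; induction i as [|i IH]; simpl; intros b j E.
  - inversion E; subst; split; [apply size_pos | reflexivity].
  - destruct (locate i) as [b0 j0]; destruct (IH b0 j0 eq_refl) as [H1 H2].
    destruct (Nat.ltb_spec (S j0) (size b0)); inversion E; subst; simpl;
      split; try lia; apply size_pos.
Qed.

Lemma block_pos_mono b b' : b < b' -> block_pos b + size b <= block_pos b'.
Proof.
  induction b' as [|b' IH]; intros H; [lia|]; simpl.
  destruct (Nat.eq_dec b b'); [subst; lia|]; specialize (IH ltac:(lia)); lia.
Qed.

Lemma locate_mono i i' b j b' j' : i < i' -> locate i = (b, j) -> locate i' = (b', j') ->
  b < b' \/ (b = b' /\ j < j').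
Proof.
  intros H E E'; apply locate_spec in E as [Hj ->]; apply locate_spec in E' as [Hj' ->].
  destruct (Nat.lt_trichotomy b b') as [Hlt|[->|Hlt]]; [left; exact Hlt | right; lia |].
  pose proof (block_pos_mono b' b Hlt); lia.
Qed.

Lemma locate_block_pos b j : j < size b -> locate (block_pos b + j) = (b, j).
Proof.
  intros Hj; destruct (locate (block_pos b + j)) as [b' j'] eqn:E.
  destruct (locate_spec _ _ _ E) as [Hj' Hpos].
  destruct (Nat.lt_trichotomy b b') as [Hlt|[<-|Hlt]].
  - pose proof (block_pos_mono b b' Hlt); lia.
  - f_equal; lia.
  - pose proof (block_pos_mono b' b Hlt); lia.
Qed.

Definition arrangement (i : nat) : nat :=
  let (b, j) := locate i in first b + parity_perm (size b) (size b) j.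

Lemma arrangement_locate i b j : locate i = (b, j) ->
  arrangement i = first b + parity_perm (size b) (size b) j /\
  first b <= arrangement i < first b + size b.
Proof.
  intros E; unfold arrangement; rewrite E; split; [reflexivity|].
  pose proof (parity_perm_lt (size b) (size b) j (le_n _) (proj1 (locate_spec i b j E))).
  lia.
Qed.

Lemma arrangement_inj i i' : arrangement i = arrangement i' -> i = i'.
Proof.
  intros E.
  destruct (locate i) as [b j] eqn:L; destruct (locate i') as [b' j'] eqn:L'.
  destruct (arrangement_locate i b j L) as [Ai Bi].
  destruct (arrangement_locate i' b' j' L') as [Ai' Bi'].
  destruct (locate_spec i b j L) as [Hj ->]; destruct (locate_spec i' b' j' L') as [Hj' ->].
  assert (b = b') as <-.
  { destruct (Nat.lt_trichotomy b b') as [Hlt|[->|Hlt]]; [| reflexivity |].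
    - pose proof (first_gap_lt b b' Hlt); lia.
    - pose proof (first_gap_lt b' b Hlt); lia. }
  enough (j = j') by lia.
  apply (parity_perm_inj (size b) (size b)); lia.
Qed.

Lemma arrangement_onto x : block_set x = true <-> exists i, arrangement i = x.
Proof.
  rewrite block_set_spec; split.
  - intros [b Hb].
    destruct (parity_perm_surj (size b) (size b) (x - first b) (le_n _) ltac:(lia))
      as [j [Hj Hpj]].
    exists (block_pos b + j).
    destruct (arrangement_locate _ b j (locate_block_pos b j Hj)) as [-> _]; lia.
  - intros [i <-]; destruct (locate i) as [b j] eqn:L; exists b.
    exact (proj2 (arrangement_locate i b j L)).
Qed.

Lemma AP_last_two_same_block i0 i1 i2 b1 j1 b2 j2 : i1 < i2 ->
  locate i1 = (b1, j1) -> locate i2 = (b2, j2) ->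
  arrangement i0 + arrangement i2 = 2 * arrangement i1 -> b1 = b2 /\ j1 < j2.
Proof.
  intros H12 L1 L2 E.
  destruct (locate_mono i1 i2 b1 j1 b2 j2 H12 L1 L2) as [Hlt|Hsame]; [|exact Hsame].
  destruct (arrangement_locate i1 b1 j1 L1) as [_ B1].
  destruct (arrangement_locate i2 b2 j2 L2) as [_ B2].
  pose proof (first_gap_lt b1 b2 Hlt); lia.
Qed.

Lemma no_AP_in_block i0 i1 i2 b j0 j1 j2 :
  locate i0 = (b, j0) -> locate i1 = (b, j1) -> locate i2 = (b, j2) -> j0 < j1 -> j1 < j2 ->
  arrangement i0 + arrangement i2 <> 2 * arrangement i1.
Proof.
  intros L0 L1 L2 H01 H12.
  destruct (arrangement_locate i0 b j0 L0) as [-> _].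
  destruct (arrangement_locate i1 b j1 L1) as [-> _].
  destruct (arrangement_locate i2 b j2 L2) as [-> _].
  pose proof (parity_perm_no_AP3 (size b) (size b) j0 j1 j2 (le_n _) H01 H12
    (proj1 (locate_spec i2 b j2 L2))).
  lia.
Qed.

Theorem block_set_4free : n_free 4 block_set.
Proof.
  split; [exact block_set_0 | right].
  exists arrangement; split; [exact arrangement_inj | split; [exact arrangement_onto|]].
  apply not_has_AP_4; intros i0 i1 i2 i3 H01 H12 H23 E1 E2.
  destruct (locate i1) as [b1 j1] eqn:L1; destruct (locate i2) as [b2 j2] eqn:L2;
    destruct (locate i3) as [b3 j3] eqn:L3.
  destruct (AP_last_two_same_block i0 i1 i2 b1 j1 b2 j2 H12 L1 L2 E1) as [<- Hj12].
  destruct (AP_last_two_same_block i1 i2 i3 b1 j2 b3 j3 H23 L2 L3 E2) as [<- Hj23].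
  exact (no_AP_in_block i1 i2 i3 b1 j1 j2 j3 L1 L2 L3 Hj12 Hj23 E2).
Qed.

Local Notation count := (count_upto block_set).

Lemma count_in_block b k : first b <= k < first b + size b ->
  count k = count (first b - 1) + (k + 1 - first b).
Proof.
  intros Hk; pose proof (first_gt b).
  replace k with (first b - 1 + (k + 1 - first b)) at 1 by lia.
  apply count_upto_run_full; intros x Hx; apply block_set_spec; exists b; lia.
Qed.

Lemma count_block_end b : count (first b + size b - 1) = count (first b - 1) + size b.
Proof.
  pose proof (size_pos b); rewrite (count_in_block b) by lia; f_equal; lia.
Qed.

Lemma count_in_gap b k : first b + size b <= S k -> k < first (S b) ->
  count (first (S b) - 1) = count k.
Proof.
  intros Hk Hk'; replace (first (S b) - 1) with (k + (first (S b) - 1 - k)) by lia.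
  apply count_upto_run_empty; intros x Hx; apply (block_set_gap b); lia.
Qed.

Lemma count_next_first b : count (first (S b) - 1) = count (first b - 1) + size b.
Proof.
  pose proof (size_pos b); pose proof (first_gap b).
  rewrite (count_in_gap b (first b + size b - 1)) by lia; apply count_block_end.
Qed.

Lemma find_block k : first 0 <= k -> exists b, first b <= k < first (S b).
Proof.
  induction k as [|k IH]; intros H; [lia|].
  destruct (Nat.eq_dec (S k) (first 0)) as [E|E].
  - exists 0; pose proof (first_gap 0); pose proof (size_pos 0); lia.
  - destruct (IH ltac:(lia)) as [b Hb].
    destruct (Nat.eq_dec (S k) (first (S b))) as [E'|E'].
    + exists (S b); pose proof (first_gap (S b)); pose proof (size_pos (S b)); lia.
    + exists b; lia.
Qed.

(* Inside a block the ratio [count k / k] increases and in a gap it decreases,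
   so a lower bound at the points [first b - 1] holds everywhere. *)
Lemma block_count_lower p q r : p <= q ->
  (forall b, p * (first b - 1) <= q * count (first b - 1) + r) ->
  forall k, first 0 <= k -> p * k <= q * count k + r.
Proof.
  intros Hpq Hfirst k Hk; destruct (find_block k Hk) as [b Hb].
  destruct (Nat.lt_ge_cases k (first b + size b)).
  - rewrite (count_in_block b k) by lia; specialize (Hfirst b); nia.
  - rewrite <- (count_in_gap b k) by lia; specialize (Hfirst (S b)).
    pose proof (Nat.mul_le_mono_l k (first (S b) - 1) p ltac:(lia)); lia.
Qed.

Hypothesis first_sum_lt : forall b b', b < b' ->
  (first b + size b - 1) + (first b' + size b' - 1) < 2 * first b'.

Theorem block_set_3free : n_free 3 block_set.
Proof.
  split; [exact block_set_0 | right].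
  exists arrangement; split; [exact arrangement_inj | split; [exact arrangement_onto|]].
  apply not_has_AP_3; intros i0 i1 i2 H01 H12 E.
  destruct (locate i0) as [b0 j0] eqn:L0; destruct (locate i1) as [b1 j1] eqn:L1;
    destruct (locate i2) as [b2 j2] eqn:L2.
  destruct (AP_last_two_same_block i0 i1 i2 b1 j1 b2 j2 H12 L1 L2 E) as [<- Hj12].
  destruct (locate_mono i0 i1 b0 j0 b1 j1 H01 L0 L1) as [Hlt|[<- Hj01]].
  - destruct (arrangement_locate i0 b0 j0 L0) as [_ B0].
    destruct (arrangement_locate i1 b1 j1 L1) as [_ B1].
    destruct (arrangement_locate i2 b1 j2 L2) as [_ B2].
    pose proof (first_sum_lt b0 b1 Hlt); lia.
  - exact (no_AP_in_block i0 i1 i2 b0 j0 j1 j2 L0 L1 L2 Hj01 Hj12 E).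
Qed.

End BlockSet.

Definition tern_first b := 2 * 3 ^ b.
Definition tern_size b := 3 ^ b.
Definition tern_set := block_set tern_first tern_size.

Lemma tern_size_pos b : 1 <= tern_size b.
Proof. unfold tern_size; pose proof (Nat.pow_nonzero 3 b ltac:(lia)); lia. Qed.

Lemma tern_first_pos : 1 <= tern_first 0.
Proof. cbv; lia. Qed.

Lemma tern_first_gap b : 2 * (tern_first b + tern_size b) <= tern_first (S b).
Proof. unfold tern_first, tern_size; cbn [Nat.pow]; lia. Qed.

Lemma tern_first_sum_lt b b' : b < b' ->
  (tern_first b + tern_size b - 1) + (tern_first b' + tern_size b' - 1) < 2 * tern_first b'.
Proof.
  intros H; pose proof (tern_size_pos b'); unfold tern_first, tern_size in *.
  pose proof (Nat.pow_le_mono_r 3 (S b) b' ltac:(lia) H); cbn [Nat.pow] in *; lia.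
Qed.

Lemma tern_set_3free : n_free 3 tern_set.
Proof.
  exact (block_set_3free _ _ tern_size_pos tern_first_pos tern_first_gap tern_first_sum_lt).
Qed.

Lemma tern_count_first b : 3 ^ b <= 2 * count_upto tern_set (tern_first b - 1) + 1.
Proof.
  unfold tern_set; induction b as [|b IH]; [cbn; lia|].
  rewrite (count_next_first _ _ tern_size_pos tern_first_pos tern_first_gap).
  change (tern_size b) with (3 ^ b); cbn [Nat.pow]; lia.
Qed.

Lemma tern_count_block_end b : tern_first b + tern_size b - 1
  <= 2 * count_upto tern_set (tern_first b + tern_size b - 1).
Proof.
  pose proof (tern_count_first b); unfold tern_set in *.
  rewrite (count_block_end _ _ tern_size_pos tern_first_pos tern_first_gap b).
  change (tern_first b) with (2 * 3 ^ b) in *; change (tern_size b) with (3 ^ b); lia.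
Qed.

Lemma tern_count_lower k : 2 <= k -> k <= 4 * count_upto tern_set k + 2.
Proof.
  intros Hk; enough (1 * k <= 4 * count_upto tern_set k + 2) by lia.
  apply (block_count_lower _ _ tern_size_pos tern_first_pos tern_first_gap); [lia | | exact Hk].
  intros b; pose proof (tern_count_first b); unfold tern_set in *.
  change (tern_first b) with (2 * 3 ^ b) in *; lia.
Qed.

Definition geom_first c b := (2 * c) ^ b.
Definition geom_size c b := (c - 1) * (2 * c) ^ b.
Definition geom_set c := block_set (geom_first c) (geom_size c).

Section Geom.

Variable c : nat.
Hypothesis c_ge_2 : 2 <= c.

Lemma geom_first_pos b : 1 <= geom_first c b.
Proof. unfold geom_first; pose proof (Nat.pow_nonzero (2 * c) b ltac:(lia)); lia. Qed.

Lemma geom_size_pos b : 1 <= geom_size c b.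
Proof. unfold geom_size; pose proof (geom_first_pos b); unfold geom_first in *; nia. Qed.

Lemma geom_first_gap b : 2 * (geom_first c b + geom_size c b) <= geom_first c (S b).
Proof.
  unfold geom_first, geom_size; cbn [Nat.pow]; rewrite Nat.mul_sub_distr_r; nia.
Qed.

Lemma geom_set_4free : n_free 4 (geom_set c).
Proof. exact (block_set_4free _ _ geom_size_pos (geom_first_pos 0) geom_first_gap). Qed.

Lemma geom_count_block_end b :
  (c - 1) * (geom_first c b + geom_size c b - 1)
  <= c * count_upto (geom_set c) (geom_first c b + geom_size c b - 1).
Proof.
  unfold geom_set; rewrite (count_block_end _ _ geom_size_pos (geom_first_pos 0) geom_first_gap b).
  pose proof (geom_first_pos b).
  change (geom_size c b) with ((c - 1) * geom_first c b).
  rewrite !Nat.mul_sub_distr_r; nia.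
Qed.

End Geom.

Lemma geom4_count_first b : geom_first 4 b - 1 <= 3 * count_upto (geom_set 4) (geom_first 4 b - 1).
Proof.
  unfold geom_set; induction b as [|b IH]; [cbn; lia|].
  rewrite (count_next_first _ _ (geom_size_pos 4 ltac:(lia)) (geom_first_pos 4 ltac:(lia) 0)
    (geom_first_gap 4 ltac:(lia))).
  change (geom_size 4 b) with (3 * geom_first 4 b).
  change (geom_first 4 (S b)) with (8 * geom_first 4 b); lia.
Qed.

Lemma geom4_count_lower k : 1 <= k -> k <= 3 * count_upto (geom_set 4) k.
Proof.
  intros Hk; enough (1 * k <= 3 * count_upto (geom_set 4) k + 0) by lia.
  apply (block_count_lower _ _ (geom_size_pos 4 ltac:(lia)) (geom_first_pos 4 ltac:(lia) 0)
    (geom_first_gap 4 ltac:(lia))); [lia | | exact Hk].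
  intros b; pose proof (geom4_count_first b); unfold geom_set in *; lia.
Qed.

Local Open Scope R_scope.

Lemma limsup_exists (u : nat -> R) m M : (forall k, m <= u k <= M) -> exists l, is_limsup u l.
Proof.
  intros Hu.
  set (E := fun y => forall N, exists k, (k >= N)%nat /\ y <= u k).
  assert (Em : E m) by (intros N; exists N; split; [lia | apply Hu]).
  assert (Eb : bound E).
  { exists M; intros y Hy; destruct (Hy 0%nat) as [k [_ Hk]]; specialize (Hu k); lra. }
  destruct (completeness E Eb (ex_intro _ m Em)) as [l [Hub Hlub]].
  exists l; split.
  - intros eps Heps; apply NNPP; intros Hn.
    assert (E (l + eps)).
    { intros N; apply NNPP; intros Hk; apply Hn; exists N; intros k Hk'.
      apply Rnot_le_lt; intros Hle; apply Hk; exists k; split; assumption. }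
    specialize (Hub _ H); lra.
  - intros eps Heps N; apply NNPP; intros Hn.
    assert (is_upper_bound E (l - eps)).
    { intros y Hy; destruct (Hy N) as [k [Hk Hyk]]; apply Rnot_lt_le; intros Hlt.
      apply Hn; exists k; split; [assumption | lra]. }
    specialize (Hlub _ H); lra.
Qed.

Lemma liminf_exists (u : nat -> R) m M : (forall k, m <= u k <= M) -> exists l, is_liminf u l.
Proof.
  intros Hu.
  set (E := fun y => exists N, forall k, (k >= N)%nat -> y <= u k).
  assert (Em : E m) by (exists 0%nat; intros k _; apply Hu).
  assert (Eb : bound E).
  { exists M; intros y [N Hy]; specialize (Hy N (le_n _)); specialize (Hu N); lra. }
  destruct (completeness E Eb (ex_intro _ m Em)) as [l [Hub Hlub]].
  exists l; split.
  - intros eps Heps; apply NNPP; intros Hn.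
    assert (is_upper_bound E (l - eps)).
    { intros y [N Hy]; apply Rnot_lt_le; intros Hlt; apply Hn; exists N; intros k Hk.
      specialize (Hy k Hk); lra. }
    specialize (Hlub _ H); lra.
  - intros eps Heps N; apply NNPP; intros Hn.
    assert (E (l + eps)).
    { exists N; intros k Hk; apply Rnot_lt_le; intros Hlt; apply Hn; exists k; split; assumption. }
    specialize (Hub _ H); lra.
Qed.

Lemma limsup_ge_frequently u l c : (forall N, exists k, (k >= N)%nat /\ c <= u k) ->
  is_limsup u l -> c <= l.
Proof.
  intros Hc [H _]; apply Rnot_lt_le; intros Hlt.
  destruct (H (c - l) ltac:(lra)) as [N HN]; destruct (Hc N) as [k [Hk Hck]].
  specialize (HN k Hk); lra.
Qed.

Lemma liminf_ge_eventually u l c :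
  (forall d, d > 0 -> exists N, forall k, (k >= N)%nat -> c - d <= u k) ->
  is_liminf u l -> c <= l.
Proof.
  intros Hc [_ H]; apply Rnot_lt_le; intros Hlt.
  destruct (Hc ((c - l) / 2) ltac:(lra)) as [N HN].
  destruct (H ((c - l) / 2) ltac:(lra) N) as [k [Hk Hk2]].
  specialize (HN k Hk); lra.
Qed.

Lemma limsup_le_bound u l M : (forall k, u k <= M) -> is_limsup u l -> l <= M.
Proof.
  intros Hu [_ H]; apply Rnot_lt_le; intros Hlt.
  destruct (H (l - M) ltac:(lra) 0%nat) as [k [_ Hk]]; specialize (Hu k); lra.
Qed.

Lemma liminf_le_bound u l M : (forall k, u k <= M) -> is_liminf u l -> l <= M.
Proof.
  intros Hu [H _]; apply Rnot_lt_le; intros Hlt.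
  destruct (H (l - M) ltac:(lra)) as [N HN]; specialize (HN N (le_n _)); specialize (Hu N); lra.
Qed.

Lemma dens_seq_bounds A k : 0 <= dens_seq A k <= 1.
Proof.
  unfold dens_seq; pose proof (le_INR _ _ (count_upto_le A k)) as Hle.
  pose proof (pos_INR (count_upto A k)).
  destruct k as [|k]; [simpl; unfold Rdiv; rewrite Rmult_0_l; lra|].
  assert (0 < INR (S k)) by (apply lt_0_INR; lia).
  split; [unfold Rdiv; apply Rmult_le_pos; [lra | left; apply Rinv_0_lt_compat; lra]|].
  apply Rmult_le_reg_r with (INR (S k)); [lra|].
  unfold Rdiv; rewrite Rmult_assoc, Rinv_l by lra; lra.
Qed.

Lemma upper_density_exists A : exists l, upper_density A l.
Proof. exact (limsup_exists _ 0 1 (dens_seq_bounds A)). Qed.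

Lemma lower_density_exists A : exists l, lower_density A l.
Proof. exact (liminf_exists _ 0 1 (dens_seq_bounds A)). Qed.

Lemma upper_density_le_1 A l : upper_density A l -> l <= 1.
Proof. apply limsup_le_bound; intros k; apply dens_seq_bounds. Qed.

Lemma lower_density_le_1 A l : lower_density A l -> l <= 1.
Proof. apply liminf_le_bound; intros k; apply dens_seq_bounds. Qed.

Lemma upper_density_ge A l p q : (0 < q)%nat ->
  (forall N, exists k, (N <= k)%nat /\ (0 < k)%nat /\ (p * k <= q * count_upto A k)%nat) ->
  upper_density A l -> INR p / INR q <= l.
Proof.
  intros Hq Hk; apply limsup_ge_frequently; intros N.
  destruct (Hk N) as [k [HN [Hk0 Hpk]]]; exists k; split; [exact HN|].
  apply le_INR in Hpk; rewrite !mult_INR in Hpk.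
  assert (0 < INR k) by (apply lt_0_INR; lia); assert (0 < INR q) by (apply lt_0_INR; lia).
  unfold dens_seq; apply Rmult_le_reg_r with (INR q * INR k); [nra|].
  replace (INR p / INR q * (INR q * INR k)) with (INR p * INR k) by (field; lra).
  replace (INR (count_upto A k) / INR k * (INR q * INR k))
    with (INR q * INR (count_upto A k)) by (field; lra).
  lra.
Qed.

Lemma lower_density_ge A l p q r k0 : (0 < q)%nat ->
  (forall k, (k0 <= k)%nat -> (p * k <= q * count_upto A k + r)%nat) ->
  lower_density A l -> INR p / INR q <= l.
Proof.
  intros Hq Hk; apply liminf_ge_eventually; intros d Hd.
  destruct (INR_unbounded (INR r / d)) as [n Hn].
  exists (Nat.max n (Nat.max k0 1)); intros k Hkn.
  specialize (Hk k ltac:(lia)); apply le_INR in Hk; rewrite plus_INR, !mult_INR in Hk.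
  assert (0 < INR k) by (apply lt_0_INR; lia).
  assert (1 <= INR q) by (apply (le_INR 1); lia).
  assert (INR r < d * INR k).
  { assert (INR n <= INR k) by (apply le_INR; lia).
    apply Rmult_gt_compat_l with (r := d) in Hn; [|lra].
    replace (d * (INR r / d)) with (INR r) in Hn by (field; lra); nra. }
  unfold dens_seq.
  replace (INR p / INR q - d) with ((INR p * INR k - d * INR q * INR k) / (INR q * INR k))
    by (field; lra).
  replace (INR (count_upto A k) / INR k)
    with (INR q * INR (count_upto A k) / (INR q * INR k)) by (field; lra).
  apply Rmult_le_compat_r; [left; apply Rinv_0_lt_compat; nra|].
  assert (d * INR k * 1 <= d * INR k * INR q) by (apply Rmult_le_compat_l; nra).
  lra.
Qed.

Lemma is_lub_exists_ge (E : R -> Prop) M c : (forall x, E x -> x <= M) ->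
  (exists x, E x /\ c <= x) -> exists a, is_lub E a /\ c <= a.
Proof.
  intros HM [x [Ex Hx]].
  destruct (completeness E (ex_intro _ M HM) (ex_intro _ x Ex)) as [a Ha].
  exists a; split; [exact Ha|]; pose proof (proj1 Ha x Ex); lra.
Qed.

Lemma is_lub_of_approx (E : R -> Prop) M : (forall x, E x -> x <= M) ->
  (forall e, e < M -> exists x, E x /\ e < x) -> is_lub E M.
Proof.
  intros HM Happ; split; [exact HM|]; intros b Hb; apply Rnot_lt_le; intros Hlt.
  destruct (Happ b Hlt) as [x [Ex Hx]]; specialize (Hb x Ex); lra.
Qed.

Lemma alpha_ge n A c : n_free n A -> (forall l, upper_density A l -> c <= l) ->
  exists a, is_alpha n a /\ c <= a.
Proof.
  intros HA Hc; apply (is_lub_exists_ge _ 1).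
  - intros x [B [_ Hx]]; exact (upper_density_le_1 B x Hx).
  - destruct (upper_density_exists A) as [l Hl]; exists l; split; [exists A; auto | auto].
Qed.

Lemma beta_ge n A c : n_free n A -> (forall l, lower_density A l -> c <= l) ->
  exists b, is_beta n b /\ c <= b.
Proof.
  intros HA Hc; apply (is_lub_exists_ge _ 1).
  - intros x [B [_ Hx]]; exact (lower_density_le_1 B x Hx).
  - destruct (lower_density_exists A) as [l Hl]; exists l; split; [exists A; auto | auto].
Qed.

Lemma tern_upper_density l : upper_density tern_set l -> 1 / 2 <= l.
Proof.
  replace (1 / 2) with (INR 1 / INR 2) by (simpl; field).
  apply upper_density_ge; [lia|]; intros N.
  exists (tern_first N + tern_size N - 1)%nat.
  pose proof (Nat.pow_gt_lin_r 3 N ltac:(lia)); pose proof (tern_count_block_end N).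
  unfold tern_first, tern_size in *; lia.
Qed.

Lemma tern_lower_density l : lower_density tern_set l -> 1 / 4 <= l.
Proof.
  replace (1 / 4) with (INR 1 / INR 4) by (simpl; field).
  apply (lower_density_ge _ _ 1 4 2 2); [lia|]; intros k Hk.
  pose proof (tern_count_lower k Hk); lia.
Qed.

Lemma geom_upper_density c l : (2 <= c)%nat -> upper_density (geom_set c) l -> 1 - / INR c <= l.
Proof.
  intros Hc Hl.
  replace (1 - / INR c) with (INR (c - 1) / INR c).
  2: { rewrite minus_INR by lia; simpl; field; apply not_0_INR; lia. }
  revert Hl; apply upper_density_ge; [lia|]; intros N.
  exists (geom_first c N + geom_size c N - 1)%nat.
  pose proof (Nat.pow_gt_lin_r (2 * c) N ltac:(lia)); pose proof (geom_size_pos c Hc N).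
  pose proof (geom_count_block_end c Hc N).
  unfold geom_first in *; lia.
Qed.

Lemma geom_lower_density l : lower_density (geom_set 4) l -> 1 / 3 <= l.
Proof.
  replace (1 / 3) with (INR 1 / INR 3) by (simpl; field).
  apply (lower_density_ge _ _ 1 3 0 1); [lia|]; intros k Hk.
  pose proof (geom4_count_lower k Hk); lia.
Qed.

Lemma alpha_4_eq_1 : is_alpha 4 1.
Proof.
  apply is_lub_of_approx.
  - intros x [A [_ Hx]]; exact (upper_density_le_1 A x Hx).
  - intros e He.
    destruct (INR_unbounded (/ (1 - e))) as [n Hn].
    destruct (upper_density_exists (geom_set (S (S n)))) as [l Hl].
    exists l; split; [exists (geom_set (S (S n))); split; [apply geom_set_4free; lia | exact Hl]|].
    pose proof (geom_upper_density (S (S n)) l ltac:(lia) Hl).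
    assert (/ INR (S (S n)) < 1 - e); [|lra].
    rewrite <- (Rinv_inv (1 - e)); apply Rinv_lt_contravar.
    + apply Rmult_lt_0_compat; [apply Rinv_0_lt_compat; lra | apply lt_0_INR; lia].
    + rewrite !S_INR; lra.
Qed.

Theorem theorem3 :
  is_alpha 4 1 /\
  (exists a, is_alpha 3 a /\ 1/2 <= a) /\
  (exists b, is_beta 4 b /\ 1/3 <= b) /\
  (exists b, is_beta 3 b /\ 1/4 <= b).
Proof.
  split; [exact alpha_4_eq_1 | split; [| split]].
  - apply (alpha_ge 3 tern_set); [exact tern_set_3free | exact tern_upper_density].
  - apply (beta_ge 4 (geom_set 4)); [apply geom_set_4free; lia | exact geom_lower_density].
  - apply (beta_ge 3 tern_set); [exact tern_set_3free | exact tern_lower_density].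
Qed.
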